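(* Let $n \ge 1$ and $k > 1$ be integers. If the $n \times n$ Domineering board has outcome ${\rm 1st}$, then the $n \times kn$ board ($n$ rows, $kn$ columns) has outcome ${\rm 2nd}$ or $H$ when $k$ is even, and outcome ${\rm 1st}$ or $H$ when $k$ is odd. If the $n \times n$ board has outcome ${\rm 2nd}$, then the $n \times kn$ board has outcome ${\rm 2nd}$ or $H$ for every $k > 1$.
   Context: Domineering on an $a \times b$ board (a rectangle of $a$ rows and $b$ columns of unit cells): two players, Vera and Hepzibah, alternately place dominoes on empty cells; Vera places vertical dominoes (covering two vertically adjacent empty cells), Hepzibah places horizontal dominoes (covering two horizontally adjacent empty cells). A player who cannot move on her turn loses. The outcome class is $V$ if Vera wins with optimal play regardless of who moves first, $H$ if Hepzibah wins regardless of who moves first, ${\rm 1st}$ if the first player wins, and ${\rm 2nd}$ if the second player wins. *)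

From mathcomp Require Import all_boot.
Set Implicit Arguments. Unset Strict Implicit. Unset Printing Implicit Defensive.

Section Domineering.
Variables a b : nat.

(* a cell is (row, column) *)
Definition cell : finType := ('I_a * 'I_b)%type.

Definition vadj (c d : cell) : bool :=
  (c.2 == d.2) && (val d.1 == (val c.1).+1).
Definition hadj (c d : cell) : bool :=
  (c.1 == d.1) && (val d.2 == (val c.2).+1).

(* [win_fuel fuel vera S]: the player to move (Vera if [vera], else
   Hepzibah) wins from the position where the cells of S are covered.
   A player who cannot move loses. *)
Fixpoint win_fuel (fuel : nat) (vera : bool) (S : {set cell}) : bool :=
  match fuel with
  | 0 => false
  | fuel'.+1 =>
      [exists c : cell, exists d : cell,
        [&& (if vera then vadj c d else hadj c d), c \notin S, d \notin S &
            ~~ win_fuel fuel' (~~ vera) (c |: (d |: S))]]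
  end.

(* the fuel #|~: S|.+1 exceeds the number of moves that can still be played *)
Definition wins (vera : bool) (S : {set cell}) : bool :=
  win_fuel (#|~: S|).+1 vera S.

Definition vera_first_wins : bool := wins true set0.
Definition hepz_first_wins : bool := wins false set0.
End Domineering.

Inductive outcome := OV | OH | OFirst | OSecond.

Definition outcome_of (a b : nat) : outcome :=
  match vera_first_wins a b, hepz_first_wins a b with
  | true, true => OFirst
  | false, false => OSecond
  | true, false => OV
  | false, true => OH
  end.

From mathcomp Require Import all_boot zify.

(* Cut the n x kn board into k n x n squares and pair square 2i with square
   2i+1.  Transposition turns vertical dominoes into horizontal ones, so
   Hepzibah, moving second, can answer every move of Vera in a paired square by
   the transposed move in its partner square, keeping the two squares
   transposes of each other.  Vertical dominoes never straddle two squares, so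
   Vera's moves always fall in a single square.  When k is odd the last square
   is unpaired, and there Hepzibah plays the n x n game: if she wins it moving
   second, she answers in that square; if she wins it moving first, she opens
   there. *)

Set Implicit Arguments.
Unset Strict Implicit.
Unset Printing Implicit Defensive.

Section Game.
Variables a b : nat.
Implicit Types (v : bool) (S : {set cell a b}) (c d : cell a b).

Definition place c d S := c |: (d |: S).

Definition legal v S c d :=
  [&& (if v then vadj c d else hadj c d), c \notin S & d \notin S].

Definition has_reply v (I : {set cell a b} -> Prop) S c d :=
  exists e f, legal (~~ v) (place c d S) e f /\ I (place e f (place c d S)).

Lemma card_setC_place c d S : c \notin S -> #|~: place c d S| < #|~: S|.
Proof.
move=> cS; apply: proper_card; rewrite properE !setCS; apply/andP; split.
  by apply/subsetP => x xS; rewrite !inE xS !orbT.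
by apply/subsetPn; exists c; rewrite ?inE ?eqxx.
Qed.

Lemma win_fuel_eq f g v S :
  #|~: S| < f -> #|~: S| < g -> win_fuel f v S = win_fuel g v S.
Proof.
elim: f g v S => [|f IH] [|g] v S //= ltSf ltSg.
apply: eq_existsb => c; apply: eq_existsb => d.
have [cS|cS] := boolP (c \in S); first by rewrite !andbF.
have ltS' := card_setC_place d cS.
by rewrite (IH g) //; apply: leq_trans ltS' _.
Qed.

Lemma winsP v S :
  reflect (exists c d, legal v S c d /\ ~~ wins (~~ v) (place c d S)) (wins v S).
Proof.
have winsE : wins v S = [exists c, exists d,
    legal v S c d && ~~ wins (~~ v) (place c d S)].
  rewrite {1}/wins /=; apply: eq_existsb => c; apply: eq_existsb => d.
  case cS: (c \in S); first by rewrite /legal cS !andbF.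
  rewrite /legal cS -!andbA (@win_fuel_eq _ (#|~: place c d S|).+1) //.
  exact: card_setC_place (negbT cS).
rewrite winsE; apply: (iffP existsP) => [[c /existsP [d /andP]]|[c [d]]].
  by exists c, d.
by exists c; apply/existsP; exists d; apply/andP.
Qed.

Lemma strategy_not_wins v (I : {set cell a b} -> Prop) :
  (forall S c d, I S -> legal v S c d -> has_reply v I S c d) ->
  forall S, I S -> ~~ wins v S.
Proof.
move=> reply S; move: (ltnSn #|~: S|); move: {2}#|~: S|.+1 => m.
elim: m S => [|m IH] S // ltSm IS.
apply/negP => /winsP [c [d [mv /negP]]]; apply.
have [e [f [mv' IS']]] := reply S c d IS mv.
apply/winsP; exists e, f; split => //; rewrite negbK; apply: IH IS'.
case/and3P: mv => _ cS _; case/and3P: mv' => _ eS _.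
have := card_setC_place d cS; have := card_setC_place f eS; lia.
Qed.
End Game.

Definition tr_cell n (x : cell n n) : cell n n := (x.2, x.1).

Lemma tr_cellK n : involutive (@tr_cell n). Proof. by case. Qed.

Lemma hadj_tr_cell n (x y : cell n n) : hadj (tr_cell x) (tr_cell y) = vadj x y.
Proof. by []. Qed.

Lemma eq_tr_cellL n (x y : cell n n) : (tr_cell x == y) = (x == tr_cell y).
Proof. by rewrite -(inj_eq (inv_inj (@tr_cellK n))) tr_cellK. Qed.

Definition partner t := if odd t then t.-1 else t.+1.

Lemma partnerK : involutive partner.
Proof.
case=> [|t] //; rewrite /partner /=.
by case: (boolP (odd t)) => odd_t /=; rewrite ?odd_t ?(negbTE odd_t).
Qed.

Lemma partner_neq t : partner t != t.
Proof. by rewrite /partner; case: t => [|t] //=; case: ifP => _; lia. Qed.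

Lemma unpaired_last k t : t < k -> k <= partner t -> k = t.+1 /\ odd k.
Proof.
rewrite /partner; case: ifP => odd_t ltk lek; first lia.
have -> : k = t.+1 by lia.
by rewrite /= odd_t.
Qed.

Lemma eqn_mulnD_lt n t t' i i' : i < n -> i' < n ->
  (t * n + i == t' * n + i') = (t == t') && (i == i').
Proof.
move=> lti lti'; apply/eqP/andP => [eq_ti|[/eqP-> /eqP->]] //.
have n_gt0 : 0 < n by lia.
have eq_t : t = t'.
  have := congr1 (divn^~ n) eq_ti.
  by rewrite /= !divnMDl // !divn_small // !addn0.
by subst; split => //; apply/eqP; lia.
Qed.

Section Blocks.
Variables n k : nat.
Implicit Types (S : {set cell n (k * n)}) (t u : 'I_k) (x y : cell n n).

Lemma block_col_lt t (j : 'I_n) : t * n + j < k * n.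
Proof. have := ltn_ord t; have := ltn_ord j; nia. Qed.

Definition block_cell t x : cell n (k * n) := (x.1, Ordinal (block_col_lt t x.2)).

Definition block S t : {set cell n n} := [set x | block_cell t x \in S].

Lemma block_cell_eq t t' x x' :
  (block_cell t x == block_cell t' x') = (t == t') && (x == x').
Proof.
case: x x' => [r j] [r' j']; rewrite /block_cell !xpair_eqE.
by rewrite -[X in _ && X]val_eqE /= eqn_mulnD_lt // andbCA.
Qed.

Lemma hadj_block_cell t x y : hadj (block_cell t x) (block_cell t y) = hadj x y.
Proof. by rewrite /hadj /= -addnS eqn_add2l. Qed.

Lemma vadj_block_cell t t' x y :
  vadj (block_cell t x) (block_cell t' y) = (t == t') && vadj x y.
Proof. by rewrite /vadj /= -val_eqE /= eqn_mulnD_lt // andbA. Qed.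

Lemma block_cellP (c : cell n (k * n)) : exists t x, c = block_cell t x.
Proof.
case: c => r j; have n_gt0 : 0 < n := leq_ltn_trans (leq0n r) (ltn_ord r).
have lt_jk : j %/ n < k by rewrite ltn_divLR.
exists (Ordinal lt_jk), (r, Ordinal (ltn_pmod j n_gt0)).
by congr pair; apply: val_inj; rewrite /= -divn_eq.
Qed.

Lemma block_set0 t : block set0 t = set0.
Proof. by apply/setP => x; rewrite !inE. Qed.

Lemma block_place S t t' x y :
  block (place (block_cell t x) (block_cell t y) S) t' =
  if t' == t then place x y (block S t) else block S t'.
Proof.
apply/setP => z; rewrite !inE !block_cell_eq.
by case: eqP => [->|] //=; rewrite !inE.
Qed.

Lemma legal_block v S t x y :
  legal v S (block_cell t x) (block_cell t y) = legal v (block S t) x y.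
Proof.
by rewrite /legal !inE; case: v; rewrite ?hadj_block_cell ?vadj_block_cell ?eqxx.
Qed.
End Blocks.

Section Mirror.
Variables n k : nat.
Implicit Types (S : {set cell n (k * n)}) (t u : 'I_k) (x y : cell n n).

Definition mirror_inv S :=
  (forall t u, u = partner t :> nat ->
     forall x, (block_cell u x \in S) = (block_cell t (tr_cell x) \in S)) /\
  (forall t, k <= partner t -> ~~ wins true (block S t)).

Lemma unpaired_uniq t t' : k <= partner t -> k <= partner t' -> t = t'.
Proof.
move=> unp unp'; apply: ord_inj.
have [kt _] := unpaired_last (ltn_ord t) unp.
have [kt' _] := unpaired_last (ltn_ord t') unp'.
lia.
Qed.

Lemma partners_neq_unpaired t t1 u1 :
  k <= partner t -> u1 = partner t1 :> nat -> (t1 != t) && (u1 != t).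
Proof.
move=> unp pu1; apply/andP; split; apply: contraTneq unp => <-; rewrite -ltnNge.
  by rewrite -pu1.
by rewrite pu1 partnerK.
Qed.

Lemma mirror_inv_unpaired S :
  (forall t, partner t < k -> block S t = set0) ->
  (forall t, k <= partner t -> ~~ wins true (block S t)) -> mirror_inv S.
Proof.
move=> paired0 unpaired_ok; split=> // t u pu x.
have paired_t : partner t < k by rewrite -pu.
have paired_u : partner u < k by rewrite pu partnerK.
move: (paired0 t paired_t) (paired0 u paired_u).
move=> /setP/(_ (tr_cell x)) + /setP/(_ x).
by rewrite !inE => -> ->.
Qed.

Lemma mirror_reply_paired S t u x y :
  u = partner t :> nat -> mirror_inv S ->
  legal true S (block_cell t x) (block_cell t y) ->
  has_reply true mirror_inv S (block_cell t x) (block_cell t y).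
Proof.
move=> pu [mirror unpaired_ok] mv.
have ut : (u == t) = false by apply/negbTE; rewrite -val_eqE /= pu partner_neq.
exists (block_cell u (tr_cell x)), (block_cell u (tr_cell y)); split.
  move: mv; rewrite !legal_block block_place ut /legal /= hadj_tr_cell !inE.
  by rewrite !(mirror t u) // !tr_cellK.
split=> [t1 u1 pu1 z|t0 unp0].
  have e1 : (u1 == u) = (t1 == t).
    by rewrite -val_eqE /= pu pu1 (inj_eq (can_inj partnerK)).
  have e2 : (u1 == t) = (t1 == u).
    by rewrite -!val_eqE /= pu1 pu -(inj_eq (can_inj partnerK)) partnerK.
  rewrite !inE !block_cell_eq e1 e2 (inj_eq (inv_inj (@tr_cellK n))) !eq_tr_cellL.
  rewrite (mirror t1 u1) //.
  case: (t1 =P t) => [->|_]; first by rewrite (eq_sym t) ut.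
  by case: (t1 == u).
have /andP [tt0 ut0] := partners_neq_unpaired unp0 pu.
by rewrite !block_place ![t0 == _]eq_sym (negbTE tt0) (negbTE ut0) unpaired_ok.
Qed.

Lemma mirror_reply_unpaired S t x y :
  k <= partner t -> mirror_inv S ->
  legal true S (block_cell t x) (block_cell t y) ->
  has_reply true mirror_inv S (block_cell t x) (block_cell t y).
Proof.
move=> unp [mirror unpaired_ok] mv.
have /winsP [e [f [mv' lose]]] : wins false (place x y (block S t)).
  apply: contraNT (unpaired_ok t unp) => not_wins.
  by apply/winsP; exists x, y; rewrite -legal_block.
exists (block_cell t e), (block_cell t f); split.
  by rewrite legal_block block_place eqxx.
split=> [t1 u1 pu1 z|t0 unp0].
  have /andP [t1t u1t] := partners_neq_unpaired unp pu1.
  by rewrite !inE !block_cell_eq (negbTE t1t) (negbTE u1t) (mirror t1 u1).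
by rewrite (unpaired_uniq unp0 unp) !block_place eqxx.
Qed.

Lemma mirror_reply S c d :
  mirror_inv S -> legal true S c d -> has_reply true mirror_inv S c d.
Proof.
have [t [x ->]] := block_cellP c; have [t' [y ->]] := block_cellP d.
move=> inv mv; have /andP [/eqP eq_tt' _] : (t == t') && vadj x y.
  by rewrite -vadj_block_cell; case/and3P: mv.
rewrite -{}eq_tt' in mv *.
have [paired|unp] := ltnP (partner t) k; last exact: mirror_reply_unpaired.
exact: (@mirror_reply_paired _ _ (Ordinal paired)).
Qed.
End Mirror.

Lemma vera_first_loses_wide n k :
  ~~ odd k || ~~ vera_first_wins n n -> ~~ vera_first_wins n (k * n).
Proof.
move=> even_or_loses; apply: (strategy_not_wins (@mirror_reply n k)).
apply: mirror_inv_unpaired => t; rewrite block_set0 // => unp.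
have [_ odd_k] := unpaired_last (ltn_ord t) unp.
by move: even_or_loses; rewrite odd_k.
Qed.

Lemma hepz_first_wins_wide n k :
  odd k -> hepz_first_wins n n -> hepz_first_wins n (k * n).
Proof.
case: k => [|k] // odd_k /winsP [e [f [mv lose]]].
pose last : 'I_k.+1 := ord_max.
have unp : k.+1 <= partner last.
  by move: odd_k; rewrite /partner /= => /negbTE ->.
apply/winsP; exists (block_cell last e), (block_cell last f); split.
  by rewrite legal_block block_set0.
apply: (strategy_not_wins (@mirror_reply n k.+1)).
apply: mirror_inv_unpaired => t; rewrite block_place !block_set0.
  by move=> paired; case: eqP => // eq_t; move: paired; rewrite eq_t ltnNge unp.
by move=> unp_t; rewrite (unpaired_uniq unp_t unp) eqxx.
Qed.

Theorem mainTheorem11 (n k : nat) (hn : 1 <= n) (hk : 1 < k) :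
  (outcome_of n n = OFirst ->
     if ~~ odd k then outcome_of n (k * n) = OSecond \/ outcome_of n (k * n) = OH
     else outcome_of n (k * n) = OFirst \/ outcome_of n (k * n) = OH) /\
  (outcome_of n n = OSecond ->
     outcome_of n (k * n) = OSecond \/ outcome_of n (k * n) = OH).
Proof.
rewrite /outcome_of.
case Vn: (vera_first_wins n n); case Hn: (hepz_first_wins n n); split=> // _.
- case: (boolP (odd k)) => [odd_k|even_k] /=.
    rewrite (hepz_first_wins_wide odd_k Hn).
    by case: (vera_first_wins n (k * n)); [left|right].
  have /negbTE -> : ~~ vera_first_wins n (k * n).
    by apply: vera_first_loses_wide; rewrite even_k.
  by case: (hepz_first_wins n (k * n)); [right|left].
- have /negbTE -> : ~~ vera_first_wins n (k * n).
    by apply: vera_first_loses_wide; rewrite Vn orbT.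
  by case: (hepz_first_wins n (k * n)); [right|left].
Qed.
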